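(* Let $p$ be a stochastic choice function on $X$, $M\in\mathcal N$ and $i,j\in M$ distinct. If $p(\cdot,M)$ is not bounded in a cycle over the pair $(i,j)$, then every MSC $\langle Q,\nu\rangle$ rationalizing $p$ satisfies $q_{ij}(M)=0$.
   Context: $X$ is a finite set of alternatives; a menu is a nonempty subset of $X$, and $\mathcal N$ denotes the set of all menus. A stochastic choice function is a map $p:X\times\mathcal N\to[0,1]$ with $\sum_{i\in M}p(i,M)=1$ and $p(i,M)=0$ for $i\notin M$; $p(\cdot,M)$ denotes the row vector $(p(i,M))_{i\in M}$. For $M\in\mathcal N$ and $i,j\in M$ let $\delta_{ij}(M)=p(i,M)\,p(j,\{i,j\})-p(i,\{i,j\})\,p(j,M)$. An MSC (Markov stochastic choice model) $\langle Q,\nu\rangle$ consists of, for every menu $M$, a matrix $Q(M)=(q_{ij}(M))_{i,j\in M}$ with nonnegative entries and a probability distribution $\nu_M$ on $M$, such that for all $M\in\mathcal N$ and distinct $i,j\in M$: (A1) $q_{ii}(M)=1-\sum_{k\neq i}q_{ik}(M)>0$; (A2) if $q_{ij}(\{i,j\})=0$ then $q_{ji}(\{i,j\})>0$; (A3) $q_{ij}(\{i,j\})\,q_{ji}(M)=q_{ji}(\{i,j\})\,q_{ij}(M)$. For a right stochastic matrix $Q$ on $M$ and a distribution $\nu$ on $M$ define $\rho(\nu,Q)=\lim_{\alpha\to0^+}\sum_{t\ge0}\alpha(1-\alpha)^t\nu Q^t$ (the limit exists and satisfies $\rho(\nu,Q)(I-Q)=0$). $p$ is rationalized by the MSC $\langle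 Q,\nu\rangle$ if $p(\cdot,M)=\rho(\nu_M,Q(M))$ for every $M\in\mathcal N$. A cycle on a set $M'=\{i_1,\dots,i_n\}$ (distinct elements in some order) is the set of ordered pairs $\{(i_1,i_2),\dots,(i_{n-1},i_n),(i_n,i_1)\}$. $p(\cdot,M)$ is bounded in a cycle over the pair $(i,j)$ if either $\delta_{ij}(M)=0$, or there exist $M'\subseteq M$ and a cycle on $M'$ containing $(i,j)$ such that all $\delta_{kl}(M)$, $(k,l)$ in the cycle, are strictly positive, or all are strictly negative. *)

From HB Require Import structures.
From mathcomp Require Import all_boot all_order all_algebra.
From mathcomp Require Import all_classical all_reals all_analysis.
Set Implicit Arguments. Unset Strict Implicit. Unset Printing Implicit Defensive.
Import Order.TTheory GRing.Theory Num.Theory.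
Import numFieldNormedType.Exports.
Local Open Scope classical_set_scope.
Local Open Scope ring_scope.

Section Defs.
Variables (R : realType) (X : finType).

Definition stoch_choice (p : X -> {set X} -> R) : Prop :=
  forall M : {set X}, M != finset.set0 ->
    (forall i, 0 <= p i M <= 1) /\
    (\sum_(i in M) p i M = 1) /\
    (forall i, i \notin M -> p i M = 0).

Definition delta (p : X -> {set X} -> R) (M : {set X}) (i j : X) : R :=
  p i M * p j (i |: [set j]) - p i (i |: [set j]) * p j M.

(* The cycle on the distinct elements s = [:: i1; ...; in]:
   pairs (i1,i2), ..., (i_{n-1},i_n), (i_n,i1). *)
Definition cycle_pairs (s : seq X) : seq (X * X) := zip s (rot 1 s).

Definition bounded_in_cycle (p : X -> {set X} -> R) (M : {set X}) (i j : X) : Prop :=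
  delta p M i j = 0 \/
  exists s : seq X,
    [/\ uniq s, {subset s <= M}, (i, j) \in cycle_pairs s &
      (forall kl, kl \in cycle_pairs s -> 0 < delta p M kl.1 kl.2) \/
      (forall kl, kl \in cycle_pairs s -> delta p M kl.1 kl.2 < 0)].

(* An MSC <Q, nu>: Q M is the matrix (q_ij(M))_{i,j in M}, nu M the initial
   distribution on M (entries outside M are irrelevant). *)
Definition MSC (Q : {set X} -> X -> X -> R) (nu : {set X} -> X -> R) : Prop :=
  forall M : {set X}, M != finset.set0 ->
    (forall i j, i \in M -> j \in M -> 0 <= Q M i j) /\
    (forall i, i \in M -> 0 <= nu M i) /\
    (\sum_(i in M) nu M i = 1) /\
    (forall i, i \in M ->
       Q M i i = 1 - \sum_(k in M | k != i) Q M i k /\ 0 < Q M i i) /\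
    (forall i j, i \in M -> j \in M -> i != j ->
       (Q (i |: [set j]) i j = 0 -> 0 < Q (i |: [set j]) j i) /\
       Q (i |: [set j]) i j * Q M j i = Q (i |: [set j]) j i * Q M i j).

Definition vmul (M : {set X}) (v : X -> R) (A : X -> X -> R) : X -> R :=
  fun j => \sum_(i in M) v i * A i j.

Definition vpow (M : {set X}) (v : X -> R) (A : X -> X -> R) (t : nat) : X -> R :=
  iter t (fun w => vmul M w A) v.

Definition abel_sum (M : {set X}) (v : X -> R) (A : X -> X -> R) (j : X) (a : R) : R :=
  limn (series (fun t : nat => a * (1 - a) ^+ t * vpow M v A t j)).

(* p is rationalized by <Q, nu>: p(., M) = rho(nu_M, Q(M)) for every menu M,
   rho being the limit as a -> 0+ of the Abel sums. *)
Definition rationalizes (p : X -> {set X} -> R)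
    (Q : {set X} -> X -> X -> R) (nu : {set X} -> X -> R) : Prop :=
  forall M : {set X}, M != finset.set0 -> forall j, j \in M ->
    (abel_sum M (nu M) (Q M) j @ at_right 0 --> p j M).

End Defs.

From HB Require Import structures.
From mathcomp Require Import all_boot all_order all_algebra.
From mathcomp Require Import all_classical all_reals all_analysis.
From mathcomp Require Import ring lra.
Set Implicit Arguments. Unset Strict Implicit. Unset Printing Implicit Defensive.
Import Order.TTheory GRing.Theory Num.Theory.
Import numFieldNormedType.Exports.
Local Open Scope classical_set_scope.
Local Open Scope ring_scope.

(* An Abel limit of nu Q^t is a stationary distribution of Q, so p(., M) is
   stationary for Q(M), and the net flow f(k, l) = p(k, M) q_kl(M) - p(l, M) q_lk(M)
   is a circulation on M.  Stationarity on the menu {k, l} together with (A3) gives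
   f(k, l) p(l, {k, l}) = q_kl(M) delta_kl(M), so f(k, l) and delta_kl(M) have the
   same sign as soon as q_kl(M) > 0.  If q_ij(M) > 0, then delta_ij(M) <> 0 forces
   f(i, j) <> 0, and a circulation that is nonzero on (i, j) contains a cycle through
   (i, j) along which it keeps that sign; along that cycle delta keeps it too, so
   p(., M) would be bounded in a cycle over (i, j). *)

Section AbelLimit.
Variables (R : realType) (X : finType) (M : {set X}) (v : X -> R) (A : X -> X -> R).
Hypothesis A_ge0 : forall k l, k \in M -> l \in M -> 0 <= A k l.
Hypothesis A_row_sum : forall k, k \in M -> \sum_(l in M) A k l = 1.
Hypothesis v_ge0 : forall k, k \in M -> 0 <= v k.
Hypothesis v_sum : \sum_(k in M) v k = 1.

Lemma cvg_sum_in {T : Type} (F : set_system T) {FF : Filter F}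
    (f : X -> T -> R) (l : X -> R) :
  (forall k, k \in M -> f k x @[x --> F] --> l k) ->
  \sum_(k in M) f k x @[x --> F] --> \sum_(k in M) l k.
Proof. move=> f_cvg; apply: cvg_big => //; exact: add_continuous. Qed.

Lemma vpow_ge0 t k : k \in M -> 0 <= vpow M v A t k.
Proof.
elim: t k => [|t IH] k kM //=; first exact: v_ge0.
by apply: sumr_ge0 => l lM; rewrite mulr_ge0 ?IH ?A_ge0.
Qed.

Lemma sum_vpow t : \sum_(k in M) vpow M v A t k = 1.
Proof.
elim: t => [|t IH] //=; rewrite /vmul exchange_big /= -[RHS]IH.
by apply: eq_bigr => k kM; rewrite -mulr_sumr A_row_sum // mulr1.
Qed.

Lemma vpow_le1 t k : k \in M -> vpow M v A t k <= 1.
Proof.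
move=> kM; rewrite -(sum_vpow t) (bigD1 k) //= lerDl.
by apply: sumr_ge0 => l /andP[lM _]; exact: vpow_ge0.
Qed.

Section FixedWeight.
Variable a : R.
Hypotheses (a_gt0 : 0 < a) (a_lt1 : a < 1).

Let abel_term k t := a * (1 - a) ^+ t * vpow M v A t k.

Let geometric_ge0 t : 0 <= a * (1 - a) ^+ t.
Proof. by rewrite mulr_ge0 ?ltW // exprn_gt0 // subr_gt0. Qed.

Lemma is_cvg_abel_series k : k \in M -> cvgn (series (abel_term k)).
Proof.
move=> kM; apply: nondecreasing_is_cvgn.
  rewrite seriesEnat; apply: nondecreasing_series => n _ _.
  by rewrite mulr_ge0 ?vpow_ge0.
exists 1 => _ [n _ <-]; apply: (@le_trans _ _ (series (geometric a (1 - a)) n)).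
  rewrite !seriesEnat; apply: ler_sum => t _.
  by rewrite ler_piMr ?vpow_le1.
rewrite geometric_seriesE /=; last by rewrite lt_eqF // gtrBl.
rewrite opprB addrCA subrr addr0 mulrAC divff ?gt_eqF // mul1r gerBl.
by rewrite exprn_ge0 // subr_ge0 ltW.
Qed.

Lemma abel_series_recS k n : series (abel_term k) n.+1 =
  a * v k + (1 - a) * \sum_(l in M) A l k * series (abel_term l) n.
Proof.
rewrite !seriesEnat /= big_nat_recl // {1}/abel_term expr0 mulr1; congr (_ + _).
rewrite mulr_sumr; under [RHS]eq_bigr do rewrite seriesEnat /= !mulr_sumr.
rewrite exchange_big /=; apply: eq_bigr => t _.
by rewrite /abel_term /= /vmul !mulr_sumr; apply: eq_bigr => l _; rewrite exprS; ring.
Qed.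

Lemma abel_sum_rec k : k \in M -> abel_sum M v A k a =
  a * v k + (1 - a) * \sum_(l in M) A l k * abel_sum M v A l a.
Proof.
move=> kM; apply: cvg_lim; first exact: Rhausdorff.
rewrite -cvg_shiftS; under eq_cvg do rewrite /= abel_series_recS.
apply: cvgD; first exact: cvg_cst.
by apply: cvgMr; apply: cvg_sum_in => l lM; apply: cvgMr; exact: is_cvg_abel_series.
Qed.

End FixedWeight.

Lemma abel_limit_stationary (pi : X -> R) :
  (forall k, k \in M -> abel_sum M v A k @ at_right 0 --> pi k) ->
  forall k, k \in M -> pi k = \sum_(l in M) A l k * pi l.
Proof.
move=> abel_pi k kM.
have id_cvg0 : (x : R) @[x --> at_right 0] --> 0 by apply: cvg_at_right_filter.
apply: (cvg_unique (@Rhausdorff R) (abel_pi k kM)) => /=.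
have -> : \sum_(l in M) A l k * pi l =
    0 * v k + (1 - 0) * \sum_(l in M) A l k * pi l by rewrite mul0r add0r subr0 mul1r.
apply: cvg_trans (_ : x * v k + (1 - x) * \sum_(l in M) A l k * abel_sum M v A l x
                    @[x --> at_right 0] --> _).
  apply: near_eq_cvg; near=> x; apply/esym/abel_sum_rec => //.
apply: cvgD; first exact: cvgMl.
apply: cvgM; first by apply: cvgB => //; exact: cvg_cst.
by apply: cvg_sum_in => l lM; apply: cvgMr; exact: abel_pi.
Unshelve. all: by end_near. Qed.

End AbelLimit.

Section CyclePairs.
Variable X : finType.

Lemma mem_cycle_pairs (s : seq X) kl :
  kl \in cycle_pairs s -> kl.1 \in s /\ kl.2 \in s.
Proof.
move=> kl_s; have size_s : size s = size (rot 1 s) by rewrite size_rot.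
split; first by rewrite -(unzip1_zip (eq_leq size_s)) map_f.
by rewrite -(mem_rot 1) -(unzip2_zip (eq_leq (esym size_s))) map_f.
Qed.

Lemma cycle_pairs_path (e : rel X) x p kl : path e x p ->
  kl \in cycle_pairs (x :: p) -> e kl.1 kl.2 \/ kl = (last x p, x).
Proof.
rewrite /cycle_pairs rot1_cons; elim: p {1 2 4}x => [|y p IH] z /=.
  by rewrite mem_seq1 => _ /eqP ->; right.
by case/andP=> e_zy y_p; rewrite in_cons => /predU1P [-> | /(IH _ y_p)]; [left|].
Qed.

Lemma last_mem_cycle_pairs x (p : seq X) : (last x p, x) \in cycle_pairs (x :: p).
Proof.
rewrite /cycle_pairs rot1_cons; elim: p {1 3}x => [|y p IH] z /=.
  by rewrite mem_seq1.
by rewrite in_cons IH orbT.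
Qed.

Lemma path_all_target (e : rel X) (P : pred X) x p :
  (forall k l, e k l -> P l) -> path e x p -> all P p.
Proof. by move=> eP; elim: p x => //= y p IH x /andP[/eP -> /IH]. Qed.

End CyclePairs.

Section Circulation.
Variables (R : realDomainType) (X : finType) (M : {set X}).

Definition is_circulation (g : X -> X -> R) : Prop :=
  (forall k l, g k l = - g l k) /\ (forall k, k \in M -> \sum_(l in M) g k l = 0).

Lemma circulationN g : is_circulation g -> is_circulation (fun k l => - g k l).
Proof.
by case=> g_anti g_sum; split=> [k l | k kM]; rewrite ?sumrN ?g_sum ?oppr0 // g_anti.
Qed.

Variable g : X -> X -> R.
Hypothesis g_circ : is_circulation g.
Let g_anti : forall k l, g k l = - g l k := proj1 g_circ.
Let g_row_sum : forall k, k \in M -> \sum_(l in M) g k l = 0 := proj2 g_circ.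

Lemma circulation_sum_inner (S : {set X}) : \sum_(k in S) \sum_(l in S) g k l = 0.
Proof.
have sum_oppr : \sum_(k in S) \sum_(l in S) g k l = - \sum_(k in S) \sum_(l in S) g k l.
  rewrite [LHS]exchange_big -sumrN; apply: eq_bigr => l _.
  by rewrite -sumrN; apply: eq_bigr => k _; exact: g_anti.
by apply/eqP; move/eqP: sum_oppr; rewrite -addr_eq0 -mulr2n mulrn_eq0.
Qed.

Lemma circulation_cut_sum (S : {set X}) : S \subset M ->
  \sum_(k in S) \sum_(l in M :\: S) g k l = 0.
Proof.
move=> sSM; rewrite -[RHS]oppr0 -[in RHS](circulation_sum_inner S) -sumrN.
apply: eq_bigr => k kS; apply/eqP; rewrite -addr_eq0 addrC.
rewrite -[X in _ == X](g_row_sum (fintype.subsetP sSM k kS)).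
by rewrite [X in _ == X](big_setID S) (finset.setIidPr sSM).
Qed.

Lemma closed_cut_flow_eq0 {S : {set X}} : S \subset M ->
    {in S & M :\: S, forall k l, g k l <= 0} ->
  {in S & M :\: S, forall k l, g k l = 0}.
Proof.
move=> sSM out_le0 k l kS lMS.
have out_ge0 k' : k' \in S -> 0 <= \sum_(l' in M :\: S) - g k' l'.
  by move=> k'S; apply: sumr_ge0 => l' l'MS; rewrite oppr_ge0 out_le0.
have cut_eq0 : \sum_(k' in S) \sum_(l' in M :\: S) - g k' l' = 0.
  by under eq_bigr do rewrite sumrN; rewrite sumrN circulation_cut_sum ?oppr0.
apply/oppr_inj; rewrite oppr0; move: l lMS; apply: psumr_eq0P.
  by move=> l' l'MS; rewrite oppr_ge0 out_le0.
exact: psumr_eq0P cut_eq0 _ kS.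
Qed.

(* The states reachable from j along edges of positive flow have no positive
   outflow, hence (by [closed_cut_flow_eq0]) no outflow at all; so they include i. *)
Lemma circulation_cycle i j : i \in M -> j \in M -> 0 < g i j ->
  exists s : seq X, [/\ uniq s, {subset s <= M}, (i, j) \in cycle_pairs s &
    forall kl, kl \in cycle_pairs s -> 0 < g kl.1 kl.2].
Proof.
move=> iM jM gij_gt0.
pose e := [rel k l | (l \in M) && (0 < g k l)].
pose S := [set l in M | connect e j l].
have sSM : S \subset M by apply/fintype.subsetP => l; rewrite inE => /andP[].
have j_to_i : connect e j i.
  apply/negPn/negP => i_unreached.
  have out_le0 k l : k \in S -> l \in M :\: S -> g k l <= 0.
    rewrite !inE => /andP[_ j_to_k] /andP[l_unreached lM].
    rewrite leNgt; apply: contra l_unreached => gkl_gt0.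
    by rewrite lM (connect_trans j_to_k) // connect1 //= lM.
  have jS : j \in S by rewrite inE jM connect0.
  have i_out : i \in M :\: S by rewrite !inE iM andbT.
  move: (closed_cut_flow_eq0 sSM out_le0 jS i_out) => /eqP.
  by rewrite g_anti oppr_eq0 gt_eqF.
case/connectP: j_to_i => p e_p i_last.
case: (shortenP e_p) i_last => p' e_p' uniq_p' _ i_last.
exists (j :: p'); split => //.
- move=> x; rewrite in_cons => /predU1P [-> // | x_p'].
  by move: x x_p'; apply/allP; apply: path_all_target e_p' => k l /andP[].
- by rewrite i_last last_mem_cycle_pairs.
- by move=> kl /(cycle_pairs_path e_p') [/andP[] | ->] //; rewrite -i_last.
Qed.

End Circulation.

Definition net_flow (R : realType) (X : finType) (p : X -> {set X} -> R)
    (Q : {set X} -> X -> X -> R) (M : {set X}) (k l : X) : R :=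
  p k M * Q M k l - p l M * Q M l k.

Lemma net_flow_anti (R : realType) (X : finType) p Q (M : {set X}) (k l : X) :
  net_flow p Q M k l = - net_flow (R := R) p Q M l k.
Proof. by rewrite /net_flow opprB. Qed.

Lemma delta_anti (R : realType) (X : finType) p (M : {set X}) (k l : X) :
  delta p M k l = - delta (R := R) p M l k.
Proof. by rewrite /delta (finset.setUC [set l]) opprB mulrC [p l M * _]mulrC. Qed.

Section Rationalized.
Variables (R : realType) (X : finType) (p : X -> {set X} -> R).
Variables (Q : {set X} -> X -> X -> R) (nu : {set X} -> X -> R).
Hypotheses (p_choice : stoch_choice p) (Q_nu : MSC Q nu) (p_rat : rationalizes p Q nu).

Lemma choice_ge0 (N : {set X}) k : N != finset.set0 -> 0 <= p k N.
Proof. by move=> N0; have [p_bounds _] := p_choice N0; case/andP: (p_bounds k). Qed.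

Lemma Q_ge0 (N : {set X}) k l : N != finset.set0 -> k \in N -> l \in N -> 0 <= Q N k l.
Proof. by move=> N0; have [Q_ge0 _] := Q_nu N0; apply: Q_ge0. Qed.

Lemma Q_row_sum (N : {set X}) k : N != finset.set0 -> k \in N -> \sum_(l in N) Q N k l = 1.
Proof.
move=> N0 kN; have [_ [_ [_ [Q_diag _]]]] := Q_nu N0.
by rewrite (bigD1 k) //= (Q_diag k kN).1 subrK.
Qed.

Lemma choice_stationary (N : {set X}) l : N != finset.set0 -> l \in N ->
  p l N = \sum_(k in N) Q N k l * p k N.
Proof.
move=> N0; have [Q_ge0 [nu_ge0 [nu_sum _]]] := Q_nu N0.
exact: (abel_limit_stationary Q_ge0 (fun k => @Q_row_sum N k N0) nu_ge0 nu_sum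
  (pi := fun m => p m N) (p_rat N0)).
Qed.

Lemma net_flow_circulation (N : {set X}) :
  N != finset.set0 -> is_circulation N (net_flow p Q N).
Proof.
move=> N0; split=> [k l | k kN]; first exact: net_flow_anti.
rewrite sumrB -mulr_sumr Q_row_sum // mulr1 {1}(choice_stationary N0 kN).
by apply/eqP; rewrite subr_eq0; apply/eqP/eq_bigr => l _; rewrite mulrC.
Qed.

Section Pair.
Variables (M : {set X}) (k l : X).
Hypotheses (M0 : M != finset.set0) (kM : k \in M) (lM : l \in M) (kl : k != l).
Let P := [set k; l]%SET.

Let P0 : P != finset.set0. Proof. by apply/finset.set0Pn; exists k; rewrite !inE eqxx. Qed.
Let kP : k \in P. Proof. by rewrite !inE eqxx. Qed.
Let lP : l \in P. Proof. by rewrite !inE eqxx orbT. Qed.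
Let sum_pair (F : X -> R) : \sum_(m in P) F m = F k + F l.
Proof. by rewrite big_setU1 ?big_set1 // inE. Qed.

Lemma pair_Q_gt0 : 0 < Q M k l -> 0 < Q P k l.
Proof.
move=> Qkl_gt0; have [_ [_ [_ [_ pair_ax]]]] := Q_nu M0.
have [irreducible balance] := pair_ax k l kM lM kl.
rewrite lt_def Q_ge0 // andbT; apply: contraTneq Qkl_gt0 => Pkl0.
move/eqP: balance; rewrite Pkl0 mul0r eq_sym mulf_eq0 gt_eqF ?irreducible //=.
by move=> /eqP ->; rewrite ltxx.
Qed.

Lemma pair_balance : Q P k l * p k P = Q P l k * p l P.
Proof.
have := choice_stationary P0 lP; rewrite sum_pair.
have := Q_row_sum P0 lP; rewrite sum_pair => Q_l_sum.
by rewrite -[Q P l l](addKr (Q P l k)) Q_l_sum; lra.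
Qed.

Lemma pair_choice_gt0 : 0 < Q P k l -> 0 < p l P.
Proof.
move=> QPkl_gt0; have [_ [p_sum _]] := p_choice P0; rewrite sum_pair in p_sum.
rewrite lt_def choice_ge0 // andbT; apply: contraTneq QPkl_gt0 => pl0.
have pk1 : p k P = 1 by rewrite -p_sum pl0 addr0.
by have := pair_balance; rewrite pk1 pl0 mulr1 mulr0 => ->; rewrite ltxx.
Qed.

Lemma net_flow_pair_delta : 0 < Q P k l ->
  net_flow p Q M k l * p l P = Q M k l * delta p M k l.
Proof.
move=> QPkl_gt0; have [_ [_ [_ [_ pair_ax]]]] := Q_nu M0.
have [_ balance] := pair_ax k l kM lM kl.
apply: (mulfI (lt0r_neq0 QPkl_gt0)); apply/eqP; rewrite -subr_eq0; apply/eqP.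
transitivity (Q M k l * p l M * (Q P k l * p k P - Q P l k * p l P)
    - p l M * p l P * (Q P k l * Q M l k - Q P l k * Q M k l)).
  by rewrite /net_flow /delta -/P; ring.
by rewrite balance pair_balance !subrr !mulr0 subrr.
Qed.

End Pair.

Lemma net_flow_gt0_Q_gt0 (M : {set X}) k l : M != finset.set0 -> k \in M -> l \in M ->
  0 < net_flow p Q M k l -> 0 < Q M k l.
Proof.
move=> M0 kM lM f_gt0; rewrite lt_def Q_ge0 // andbT; apply: contraTneq f_gt0 => Qkl0.
by rewrite /net_flow Qkl0 mulr0 sub0r -leNgt oppr_le0 mulr_ge0 ?choice_ge0 ?Q_ge0.
Qed.

Lemma sg_delta_net_flow (M : {set X}) k l : M != finset.set0 -> k \in M -> l \in M ->
  0 < Q M k l -> Num.sg (delta p M k l) = Num.sg (net_flow p Q M k l).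
Proof.
move=> M0 kM lM Qkl_gt0; have [<- | kl] := eqVneq k l.
  by rewrite /delta /net_flow [p k M * _]mulrC !subrr.
have QPkl_gt0 := pair_Q_gt0 M0 kM lM kl Qkl_gt0.
have := congr1 Num.sg (net_flow_pair_delta M0 kM lM kl QPkl_gt0).
by rewrite !sgrM (gtr0_sg Qkl_gt0) (gtr0_sg (pair_choice_gt0 kl QPkl_gt0)) mulr1 mul1r.
Qed.

Lemma delta_gt0_of_net_flow_gt0 (M : {set X}) k l : M != finset.set0 ->
  k \in M -> l \in M -> 0 < net_flow p Q M k l -> 0 < delta p M k l.
Proof.
move=> M0 kM lM f_gt0.
by rewrite -sgr_gt0 sg_delta_net_flow ?sgr_gt0 // net_flow_gt0_Q_gt0.
Qed.

Lemma delta_lt0_of_net_flow_lt0 (M : {set X}) k l : M != finset.set0 ->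
  k \in M -> l \in M -> net_flow p Q M k l < 0 -> delta p M k l < 0.
Proof.
rewrite net_flow_anti delta_anti !oppr_lt0 => M0 kM lM.
exact: delta_gt0_of_net_flow_gt0.
Qed.

End Rationalized.

Theorem proposition3 (R : realType) (X : finType) (p : X -> {set X} -> R)
  (M : {set X}) (i j : X) :
  stoch_choice p -> M != finset.set0 -> i \in M -> j \in M -> i != j ->
  ~ bounded_in_cycle p M i j ->
  forall (Q : {set X} -> X -> X -> R) (nu : {set X} -> X -> R),
    MSC Q nu -> rationalizes p Q nu -> Q M i j = 0.
Proof.
move=> p_choice M0 iM jM _ unbounded Q nu Q_nu p_rat.
apply/eqP; rewrite eq_le (Q_ge0 Q_nu) // andbT leNgt; apply/negP => Qij_gt0.
have f_circ := net_flow_circulation Q_nu p_rat M0.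
have [f_ij_lt0 | f_ij_gt0 | f_ij0] := ltgtP (net_flow p Q M i j) 0.
- have [s [s_uniq sM ij_s f_neg]] :=
    circulation_cycle (circulationN f_circ) iM jM (ltac:(by rewrite oppr_gt0)).
  apply: unbounded; right; exists s; split => //; right => kl /[dup] kl_s.
  case/mem_cycle_pairs => /sM k1M /sM k2M.
  by apply: (delta_lt0_of_net_flow_lt0 p_choice Q_nu p_rat M0) => //; rewrite -oppr_gt0 f_neg.
- have [s [s_uniq sM ij_s f_pos]] := circulation_cycle f_circ iM jM f_ij_gt0.
  apply: unbounded; right; exists s; split => //; left => kl /[dup] kl_s.
  case/mem_cycle_pairs => /sM k1M /sM k2M.
  exact: (delta_gt0_of_net_flow_gt0 p_choice Q_nu p_rat M0) (f_pos _ kl_s).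
- apply: unbounded; left; apply/eqP.
  by rewrite -sgr_eq0 (sg_delta_net_flow p_choice Q_nu p_rat) // f_ij0 sgr0.
Qed.
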